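(* Let $\{a(n)\}_{n\in\mathbb{N}}$ be a sequence of non-negative numbers with $\sum_{n=1}^{\infty}a(n)\le 1$. Then for every $\alpha>1$ there exist $\varepsilon(\alpha)>0$ and $\nu(\alpha)\in\mathbb{N}$ such that for every integer $N\ge\nu(\alpha)$ there is a positive integer $\ell=\ell_{\alpha,N}<N^{\alpha}$ such that, with $B_{\alpha,N}:=\{\ell,2\ell,\ldots,N\ell\}$, one has $\sum_{\lambda,\mu\in B_{\alpha,N},\ \mu<\lambda}a(\lambda-\mu)<\frac{1}{N^{\varepsilon(\alpha)}}$. *)

From mathcomp Require Import all_boot all_order all_algebra.
From mathcomp Require Import reals exp.
Set Implicit Arguments. Unset Strict Implicit. Unset Printing Implicit Defensive.
Import Order.TTheory GRing.Theory Num.Theory.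
Local Open Scope ring_scope.

Definition Bset (l N : nat) : seq nat := [seq (k * l)%N | k <- iota 1 N].

Definition diffsum (R : realType) (a : nat -> R) (B : seq nat) : R :=
  \sum_(lam <- B) \sum_(mu <- B | (mu < lam)%N) a (lam - mu)%N.

From mathcomp Require Import all_boot all_order all_algebra.
From mathcomp Require Import reals exp.
From mathcomp Require Import zify ring lra.
Import Order.TTheory GRing.Theory Num.Theory.
Local Open Scope ring_scope.

(* Put S(l) := sum_(0 < d < N) a(d l).  Every difference in B_{l,N} is some d l
   with 0 < d < N, so diffsum a B_{l,N} <= N S(l).  In S(1) + ... + S(L) each
   a(m), 0 < m < N L, occurs at most d(m) times, d(m) being the number of
   divisors of m, and d(m) <= C_k m^(1/k) for every k.  Hence some l <= L has
   S(l) <= C_k (N L)^(1/k) / L; with L about N^alpha / 2 and k large, N times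
   this bound is a negative power of N. *)

Section DivisorCount.
Local Open Scope nat_scope.

Definition ndivisors m := size (divisors m).

Lemma ndivisorsM_le a b : 0 < a -> 0 < b ->
  ndivisors (a * b) <= ndivisors a * ndivisors b.
Proof.
move=> a0 b0; rewrite /ndivisors -(size_allpairs muln).
apply: uniq_leq_size; first exact: divisors_uniq.
move=> d; rewrite -dvdn_divisors ?muln_gt0 ?a0 // => d_ab.
set g := gcdn d a; have g0 : 0 < g by rewrite gcdn_gt0 a0 orbT.
have -> : d = g * (d %/ g) by rewrite mulnC divnK ?dvdn_gcdl.
apply: allpairs_f; first by rewrite -dvdn_divisors // dvdn_gcdr.
rewrite -dvdn_divisors // -(dvdn_pmul2l g0) mulnC divnK ?dvdn_gcdl //.
by rewrite /g muln_gcdl dvdn_gcd dvdn_mulr.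
Qed.

Lemma ndivisors_prod_le (I : Type) (s : seq I) (P : pred I) (F : I -> nat) :
  (forall i, P i -> 0 < F i) ->
  ndivisors (\prod_(i <- s | P i) F i) <= \prod_(i <- s | P i) ndivisors (F i).
Proof.
move=> F_gt0; elim: s => [|i s IHs]; first by rewrite !big_nil.
rewrite !big_cons; case: ifP => // Pi.
have prod_gt0 : 0 < \prod_(j <- s | P j) F j.
  by rewrite big_mkcond prodn_gt0 // => j; case: ifP => // /F_gt0.
apply: leq_trans (ndivisorsM_le _ _ (F_gt0 i Pi) prod_gt0) _.
by rewrite leq_mul2l IHs orbT.
Qed.

Lemma ndivisors_pfactor_le p e : prime p -> ndivisors (p ^ e) <= e.+1.
Proof.
move=> p_pr; have -> : e.+1 = size [seq p ^ j | j <- iota 0 e.+1].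
  by rewrite size_map size_iota.
apply: uniq_leq_size; first exact: divisors_uniq.
move=> d; rewrite -dvdn_divisors ?expn_gt0 ?prime_gt0 //.
case/(dvdn_pfactor _ _ p_pr) => j je ->.
by apply: map_f; rewrite mem_iota ltnS.
Qed.

Lemma ndivisors_le_prod_logn m : 0 < m ->
  ndivisors m <= \prod_(p <- primes m) (logn p m).+1.
Proof.
move=> m0; rewrite {1}(prod_prime_decomp m0) prime_decompE big_map /=.
rewrite big_seq [X in _ <= X]big_seq.
apply: leq_trans (ndivisors_prod_le _ _ _ _ _) _.
  by move=> p; rewrite mem_primes => /andP[/prime_gt0 p0 _]; rewrite expn_gt0 p0.
apply: leq_prod => p; rewrite mem_primes => /andP[p_pr _].
exact: ndivisors_pfactor_le.
Qed.

Lemma succn_exp_le_exp2 k e : 0 < k -> e.+1 ^ k <= k ^ k * 2 ^ e.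
Proof.
move=> k0; set q := e %/ k.
have e_lt : e.+1 <= k * q.+1 by rewrite mulnC ltn_ceil.
have q_lt : q.+1 <= 2 ^ q by apply: ltn_expl.
apply: (@leq_trans ((k * q.+1) ^ k)); first by rewrite leq_exp2r.
rewrite expnMn leq_mul2l; apply/orP; right.
apply: (@leq_trans ((2 ^ q) ^ k)); first by rewrite leq_exp2r.
by rewrite -expnM leq_pexp2l // /q leq_divM.
Qed.

Lemma leq_expn2r m n e : m <= n -> m ^ e <= n ^ e.
Proof. by move=> le_mn; elim: e => // e IHe; rewrite !expnS leq_mul. Qed.

(* Large primes cost nothing since e.+1 <= 2 ^ e; each of the fewer than 2 ^ k
   small primes costs a factor k ^ k. *)
Lemma pfactor_exp_le k p e : 0 < k -> prime p ->
  e.+1 ^ k <= (if p < 2 ^ k then k ^ k else 1) * p ^ e.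
Proof.
move=> k0 p_pr; case: ltnP => [_ | p_large] /=.
  apply: leq_trans (succn_exp_le_exp2 k e k0) _.
  by rewrite leq_mul // leq_expn2r ?prime_gt1.
rewrite mul1n; apply: (@leq_trans ((2 ^ e) ^ k)).
  by rewrite leq_exp2r // ltn_expl.
by rewrite -expnM mulnC expnM leq_expn2r.
Qed.

Lemma count_small_primes_le k m : count (fun p => p < 2 ^ k) (primes m) <= 2 ^ k.
Proof.
rewrite -size_filter -[X in _ <= X](size_iota 0).
apply: uniq_leq_size; first by rewrite filter_uniq ?primes_uniq.
by move=> p; rewrite mem_filter mem_iota => /andP[].
Qed.

Lemma ndivisors_exp_le k m : 0 < k -> 0 < m -> ndivisors m ^ k <= (k ^ k) ^ (2 ^ k) * m.
Proof.
move=> k0 m0.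
have m_prod : m = \prod_(p <- primes m) p ^ logn p m.
  by rewrite {1}(prod_prime_decomp m0) prime_decompE big_map.
have small_prod : \prod_(p <- primes m) (if p < 2 ^ k then k ^ k else 1) <= (k ^ k) ^ (2 ^ k).
  rewrite -big_mkcond big_const_seq iter_muln_1 leq_pexp2l ?expn_gt0 ?k0 //.
  exact: count_small_primes_le.
apply: leq_trans (leq_expn2r _ _ k (ndivisors_le_prod_logn m m0)) _.
rewrite (big_morph (fun n => n ^ k) (fun a b => expnMn a b k) (exp1n k)).
apply: leq_trans (_ : _ <= \prod_(p <- primes m) ((if p < 2 ^ k then k ^ k else 1) * p ^ logn p m)) _.
  rewrite big_seq [X in _ <= X]big_seq; apply: leq_prod => p.
  by rewrite mem_primes => /andP[p_pr _]; apply: pfactor_exp_le.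
by rewrite big_split /= -m_prod leq_mul2r small_prod orbT.
Qed.

End DivisorCount.

Lemma exists_le_mean (R : realDomainType) (T : eqType) (s : seq T) (F : T -> R) : s != [::] ->
  exists2 x, x \in s & (size s)%:R * F x <= \sum_(i <- s) F i.
Proof.
elim: s => [//|y s IHs] _; case: (eqVneq s [::]) => [->|/IHs[x xs Fx_le]].
  by exists y; rewrite ?mem_head // big_seq1 mul1r.
have size_cons z : (size (y :: s))%:R * F z = F z + (size s)%:R * F z :> R.
  by rewrite /= -addn1 natrD mulrDl mul1r addrC.
rewrite big_cons; case: (lerP (F y) (F x)) => [Fyx|Fxy].
  exists y; first exact: mem_head.
  by rewrite size_cons lerD2l (le_trans _ Fx_le) // ler_wpM2l.
by exists x; rewrite ?inE ?xs ?orbT // size_cons lerD // ltW.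
Qed.

Section SumsOverMultiples.
Variables (R : realType) (a : nat -> R).
Hypothesis a_ge0 : forall n, 0 <= a n.

Lemma diffsum_Bset_le l N : (0 < l)%N ->
  diffsum a (Bset l N) <= N%:R * \sum_(1 <= d < N) a (d * l)%N.
Proof.
move=> l0; rewrite /diffsum /Bset big_map.
rewrite -[N in N%:R](size_iota 1) -sum1_size natr_sum mulr_suml.
rewrite big_seq [X in _ <= X]big_seq; apply: ler_sum => k.
rewrite mem_iota add1n ltnS => /andP[k0 kN].
rewrite mul1r big_map.
have -> : \sum_(j <- iota 1 N | (j * l < k * l)%N) a (k * l - j * l)%N =
    \sum_(1 <= j < k) a ((k - j) * l)%N.
  have -> : iota 1 N = index_iota 1 N.+1 by rewrite /index_iota subSS subn0.
  rewrite [RHS](big_nat_widen _ _ N.+1 _ _ (leqW kN)).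
  by apply: eq_big => [j|j _]; rewrite ?ltn_pmul2r ?mulnBl.
rewrite big_nat_rev (big_cat_nat k0 kN) /= -[X in X <= _]addr0 lerD ?sumr_ge0 //.
by apply: ler_sum_nat => j /andP[j0 jk]; rewrite add1n subSS subKn // ltnW.
Qed.

Lemma count_dvdn_le_ndivisors m L : (0 < m)%N ->
  (count (dvdn^~ m) (index_iota 1 L) <= ndivisors m)%N.
Proof.
move=> m0; rewrite -size_filter; apply: uniq_leq_size.
  by rewrite filter_uniq ?iota_uniq.
by move=> l; rewrite mem_filter -dvdn_divisors // => /andP[].
Qed.

Lemma sum_factorizations_le (x : R) m N L : 0 <= x -> (0 < m)%N ->
  \sum_(1 <= l < L.+1) \sum_(1 <= d < N | (m == d * l)%N) x <= x *+ ndivisors m.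
Proof.
move=> x0 m0; apply: (@le_trans _ _ (\sum_(1 <= l < L.+1 | (l %| m)%N) x)).
  rewrite [X in _ <= X]big_mkcond /=; apply: ler_sum_nat => l /andP[l0 _].
  case: ifP => [l_dvd_m | l_ndvd_m].
    rewrite (eq_bigl (fun d => d == (m %/ l)%N)) => [|d]; last first.
      by apply/eqP/eqP => [->|->]; rewrite ?mulnK ?divnK.
    by rewrite big_nat1_eq; case: ifP.
  rewrite big_pred0 // => d; apply/negbTE; apply: contraFN l_ndvd_m => /eqP ->.
  exact: dvdn_mull.
by rewrite big_const_seq iter_addr_0 ler_wpMn2l ?count_dvdn_le_ndivisors.
Qed.

Hypothesis a_sum : forall M : nat, \sum_(1 <= n < M.+1) a n <= 1.

Lemma sum_multiples_le N L (T : R) : 0 <= T ->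
  (forall m, (0 < m)%N -> (m < N * L)%N -> (ndivisors m)%:R <= T) ->
  \sum_(1 <= l < L.+1) \sum_(1 <= d < N) a (d * l)%N <= T.
Proof.
move=> T0 ndivisors_le.
have a_as_sum l d : (0 < l < L.+1)%N -> (0 < d < N)%N ->
    a (d * l)%N = \sum_(1 <= m < N * L) (if (m == d * l)%N then a m else 0).
  move=> /andP[l0 lL] /andP[d0 dN]; rewrite -big_mkcond big_nat1_eq ifT //.
  by apply/andP; split; nia.
rewrite (eq_big_nat _ _ (fun l l_range => eq_big_nat _ _ (a_as_sum l ^~ l_range))).
rewrite (eq_bigr _ (fun l _ => exchange_big _ _ _ _ _ _)) exchange_big /=.
apply: (@le_trans _ _ (\sum_(1 <= m < N * L) a m *+ ndivisors m)).
  apply: ler_sum_nat => m /andP[m0 _].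
  under eq_bigr do rewrite -big_mkcond.
  exact: sum_factorizations_le.
apply: (@le_trans _ _ (\sum_(1 <= m < N * L) T * a m)).
  apply: ler_sum_nat => m /andP[m0 mNL].
  by rewrite -mulr_natl; apply: ler_wpM2r; rewrite ?ndivisors_le.
rewrite -mulr_sumr -[X in _ <= X]mulr1 ler_wpM2l //.
by case: (N * L)%N => [|M]; [rewrite big_geq | exact: a_sum].
Qed.

Lemma exists_sparse_multiple N L (T : R) : (0 < L)%N -> 0 <= T ->
  (forall m, (0 < m)%N -> (m < N * L)%N -> (ndivisors m)%:R <= T) ->
  exists2 l, (0 < l <= L)%N & diffsum a (Bset l N) <= N%:R * T / L%:R.
Proof.
move=> L0 T0 ndivisors_le.
have iota_neq0 : index_iota 1 L.+1 != [::] by rewrite /index_iota subSS subn0; case: (L) L0.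
have [l] := exists_le_mean _ _ _ (fun l => \sum_(1 <= d < N) a (d * l)%N) iota_neq0.
rewrite mem_index_iota ltnS size_iota subSS subn0 => l_range mean_le.
exists l => //; apply: le_trans (diffsum_Bset_le l N _) _; first by case/andP: l_range.
rewrite -mulrA ler_wpM2l // ler_pdivlMr ?ltr0n // mulrC.
exact: le_trans mean_le (sum_multiples_le N L T T0 ndivisors_le).
Qed.
End SumsOverMultiples.

Section Exponents.
Variable R : realType.

Lemma powR_ratio_le (N L c q alpha : R) : 1 <= N -> 0 <= c -> 0 <= q ->
  N `^ alpha / 4 <= L -> L <= N `^ alpha ->
  N * (c * (N * L)) `^ q / L <= 4 * c `^ q * N `^ (1 + q + alpha * q - alpha).
Proof.
move=> N1 c0 q0 XL LX; set X := N `^ alpha in XL LX.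
have N0 : 0 < N by lra.
have X0 : 0 < X by apply: powR_gt0.
have L0 : 0 < L by lra.
have powRND r s : N `^ (r + s) = N `^ r * N `^ s by rewrite powRD // (gt_eqF N0) implybT.
apply: (@le_trans _ _ (N * (c `^ q * (N `^ q * X `^ q)) * (4 / X))).
  apply: ler_pM; rewrite ?mulr_ge0 ?invr_ge0 ?powR_ge0 ?(ltW N0) ?(ltW L0) //.
    rewrite ler_wpM2l ?(ltW N0) // !powRM ?mulr_ge0 ?(ltW N0) ?(ltW L0) //.
    by rewrite !ler_wpM2l ?powR_ge0 // ge0_ler_powR // nnegrE ltW.
  by rewrite -invf_div lef_pV2 ?posrE ?divr_gt0.
rewrite !powRND powRr1 ?(ltW N0) // powRN -/X /X -powRrM.
by rewrite le_eqVlt; apply/orP; left; apply/eqP; ring.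
Qed.

Lemma mul_powR_lt_inv (N D e b : R) : 1 <= N -> 0 <= D -> D < N `^ e ->
  b <= - (e + e) -> D * N `^ b < (N `^ e)^-1.
Proof.
move=> N1 D0 DNe b_le; have Ne0 : 0 < N `^ e by apply: powR_gt0; lra.
apply: (@le_lt_trans _ _ (D * N `^ (- (e + e)))).
  by rewrite ler_wpM2l // ler_powR.
rewrite powRN powRD ?(gt_eqF (lt_le_trans ltr01 N1)) ?implybT // invfM mulrA.
by rewrite -[X in _ < X]mul1r ltr_pM2r ?invr_gt0 // ltr_pdivrMr // mul1r.
Qed.

Lemma ndivisors_le_root k m M : (0 < k)%N -> (0 < m)%N -> (m <= M)%N ->
  (ndivisors m)%:R <= (((k ^ k) ^ (2 ^ k) * M)%:R : R) `^ k%:R^-1.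
Proof.
move=> k0 m0 mM; have kR_neq0 : (k%:R : R) != 0 by rewrite pnatr_eq0 -lt0n.
have -> : (ndivisors m)%:R = ((ndivisors m)%:R `^ k%:R) `^ k%:R^-1 :> R.
  by rewrite -powRrM mulfV // powRr1.
apply: ge0_ler_powR; rewrite ?invr_ge0 ?nnegrE ?powR_ge0 //.
rewrite powR_mulrn // -natrX ler_nat (leq_trans (ndivisors_exp_le k m k0 m0)) //.
by rewrite leq_mul2l mM orbT.
Qed.

Lemma truncn_root_lt_powR (D e : R) (N : nat) : 0 <= D -> 0 < e ->
  (Num.truncn (D `^ e^-1) < N)%N -> D < N%:R `^ e.
Proof.
move=> D0 e0 N_gt; have -> : D = (D `^ e^-1) `^ e by rewrite -powRrM mulVf ?gt_eqF ?powRr1.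
apply: gt0_ltr_powR; rewrite ?nnegrE ?powR_ge0 //.
by apply: lt_le_trans (truncnS_gt _) _; rewrite ler_nat.
Qed.

Lemma exists_nat_between_quarter (X : R) : 4 <= X ->
  exists2 L : nat, (0 < L)%N & X / 4 <= L%:R < X.
Proof.
move=> X4; set L := Num.truncn (X / 2).
have /andP[L_le L_gt] : L%:R <= X / 2 < L.+1%:R by apply: truncn_itv; lra.
rewrite -[L.+1%:R]natr1 in L_gt.
by exists L; [rewrite -(ltr0n R) | apply/andP; split]; lra.
Qed.

Lemma exists_nat_inv_le (x y : R) : 0 < y -> exists2 k : nat, (0 < k)%N & x / k%:R <= y.
Proof.
move=> y0; exists (Num.truncn (x / y)).+1 => //.
have := truncnS_gt (x / y); rewrite ltr_pdivrMr // => lt_x.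
by rewrite ler_pdivrMr ?ltr0n // mulrC ltW.
Qed.

(* (1 + alpha) / k <= (alpha - 1) / 2 makes the exponent 1 + q + alpha q - alpha
   of powR_ratio_le, q = 1 / k, at most -(alpha - 1) / 2 = -(e + e). *)
Lemma eventually_small_ratio (alpha : R) : 1 < alpha ->
  exists (k nu : nat) (e : R), [/\ (0 < k)%N, 0 < e & forall N : nat, (nu <= N)%N ->
    exists2 L : nat, (0 < L)%N /\ L%:R < N%:R `^ alpha &
      N%:R * (((k ^ k) ^ (2 ^ k) * (N * L))%:R) `^ k%:R^-1 / L%:R < (N%:R `^ e)^-1].
Proof.
move=> alpha_gt1.
have [k k0 k_large] : exists2 k : nat, (0 < k)%N & (1 + alpha) / k%:R <= (alpha - 1) / 2.
  by apply: exists_nat_inv_le; lra.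
set c := ((k ^ k) ^ (2 ^ k))%:R : R; set q := (k%:R : R)^-1.
set e := (alpha - 1) / 4; set D := 4 * c `^ q.
exists k, (maxn 4 (Num.truncn (D `^ e^-1)).+1), e; split=> // [|N]; first by rewrite /e; lra.
rewrite geq_max => /andP[N_ge4 N_large].
have N4 : 4 <= N%:R :> R by rewrite (ler_nat R 4).
have X4 : 4 <= N%:R `^ alpha by apply: (le_trans N4); apply: le1r_powR; lra.
have [L L0 /andP[XL LX]] := exists_nat_between_quarter _ X4.
exists L => //; rewrite !natrM -/c.
have N1 : 1 <= N%:R :> R by lra.
apply: le_lt_trans (powR_ratio_le _ _ c q alpha N1 (ler0n _ _) _ XL (ltW LX)) _.
  by rewrite invr_ge0.
apply: mul_powR_lt_inv => //; first by rewrite mulr_ge0 ?powR_ge0.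
  by apply: truncn_root_lt_powR; rewrite ?mulr_ge0 ?powR_ge0 // /e; lra.
have : (1 + alpha) * q <= (alpha - 1) / 2 by [].
by rewrite /e; lra.
Qed.
End Exponents.

Theorem corollary10 (R : realType) (a : nat -> R)
  (a_ge0 : forall n, 0 <= a n)
  (a_sum : forall M : nat, \sum_(1 <= n < M.+1) a n <= 1) :
  forall alpha : R, 1 < alpha ->
  exists (eps : R) (nu : nat), 0 < eps /\
    forall N : nat, (nu <= N)%N ->
      exists l : nat, (0 < l)%N /\ (l%:R < powR (N%:R) alpha) /\
        diffsum a (Bset l N) < (powR (N%:R) eps)^-1.
Proof.
move=> alpha alpha_gt1.
have [k [nu [e [k0 e0 small_ratio]]]] := eventually_small_ratio _ _ alpha_gt1.
exists e, nu; split=> // N /small_ratio[L [L0 LX] ratio_lt].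
set T := (((k ^ k) ^ (2 ^ k) * (N * L))%:R : R) `^ k%:R^-1.
have ndivisors_le m : (0 < m)%N -> (m < N * L)%N -> (ndivisors m)%:R <= T.
  by move=> m0 /ltnW; apply: ndivisors_le_root.
have [l /andP[l0 lL] diffsum_le] :=
  exists_sparse_multiple _ _ a_ge0 a_sum _ _ _ L0 (powR_ge0 _ _) ndivisors_le.
exists l; split=> //; split; last exact: le_lt_trans diffsum_le ratio_lt.
by apply: le_lt_trans LX; rewrite ler_nat.
Qed.
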